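(* For all integers $n_1\ge n_2\ge n_3\ge 2$, $$m_0(1,n_1,n_2,n_3)=n_1+n_2+n_3-2.$$
   Context: For integers $n_1\ge\dots\ge n_r$, let $X_\ell=[n_\ell]$. An $r$-partite $r$-graph is a family $\mathcal F\subseteq X_1\times\dots\times X_r$; its vertices are the pairs $(\ell,x)$ with $x\in X_\ell$, and an edge $A=(a_1,\dots,a_r)$ contains the vertex $(\ell,x)$ iff $a_\ell=x$. Two edges $A,B$ are disjoint if $A[\ell]\ne B[\ell]$ for all $\ell$. The matching number $\nu(\mathcal F)$ is the maximum number of pairwise disjoint edges of $\mathcal F$. A transversal is a set $T$ of vertices such that every edge of $\mathcal F$ contains a vertex of $T$; $\tau(\mathcal F)$ is the minimum size of a transversal. For integers $r\ge 3$ and $n_1\ge\dots\ge n_r>s\ge 1$, $m_0(s,n_1,\dots,n_r)$ denotes the maximum of $|\mathcal F|$ over all $\mathcal F\subseteq X_1\times\dots\times X_r$ with $\nu(\mathcal F)\le s<\tau(\mathcal F)$. *)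

(* 3-partite 3-graphs on X_1 x X_2 x X_3 with X_l = 'I_(n_l)
   (0-based copy of [n_l]). *)
From mathcomp Require Import all_boot.
Set Implicit Arguments. Unset Strict Implicit. Unset Printing Implicit Defensive.

Section Tripartite.
Variables n1 n2 n3 : nat.

Definition edge3 := ('I_n1 * 'I_n2 * 'I_n3)%type.
(* vertices (l, x) with x in X_l, encoded as a tagged sum *)
Definition vert3 := ('I_n1 + 'I_n2 + 'I_n3)%type.

Definition coord1 (A : edge3) := A.1.1.
Definition coord2 (A : edge3) := A.1.2.
Definition coord3 (A : edge3) := A.2.

Definition contains (A : edge3) (v : vert3) : bool :=
  match v with
  | inl (inl x) => coord1 A == x
  | inl (inr x) => coord2 A == x
  | inr x => coord3 A == x
  end.

Definition edisjoint (A B : edge3) : bool :=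
  [&& coord1 A != coord1 B, coord2 A != coord2 B & coord3 A != coord3 B].

Definition is_matching (F M : {set edge3}) : bool :=
  (M \subset F) && [forall A in M, forall B in M, (A != B) ==> edisjoint A B].

Definition is_transversal (F : {set edge3}) (S : {set vert3}) : bool :=
  [forall A in F, exists v in S, contains A v].

Definition nu (F : {set edge3}) : nat :=
  \max_(M : {set edge3} | is_matching F M) #|M|.

(* transversal number (the full vertex set is always a transversal) *)
Definition tau (F : {set edge3}) : nat :=
  \big[minn/#|[set: vert3]|]_(S : {set vert3} | is_transversal F S) #|S|.

Definition m0 (s : nat) : nat :=
  \max_(F : {set edge3} | (nu F <= s) && (s < tau F)) #|F|.

End Tripartite.

From Pilot Require Import Defs.
From mathcomp Require Import all_boot zify.
Set Implicit Arguments. Unset Strict Implicit. Unset Printing Implicit Defensive.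

(* For nu <= 1 < tau the family F is intersecting and no single vertex meets
   all its edges.  An edge A of F, an edge avoiding the second coordinate of A
   and one avoiding its third coordinate contain two edges E = (x0, b, c),
   E' = (x0, b', c') with b <> b', c <> c'; they must share their first
   coordinate.  An edge
   avoiding x0 meets both, so it is (y, b, c') or (y, b', c).  If both shapes
   occur they have the same y and F has at most four edges; otherwise F lies
   in the union of the three axis-parallel lines through (x0, b, c') (or
   (x0, b', c)), which has n1 + n2 + n3 - 2 edges.  Conversely such a union of
   lines is intersecting and, as soon as every n_l >= 2, has no single-vertex
   transversal. *)

Lemma bigmin_leq (I : finType) (P : pred I) (F : I -> nat) idx j :
  P j -> \big[minn/idx]_(i | P i) F i <= F j.
Proof.
move=> Pj; rewrite -big_filter.
have : j \in [seq i <- index_enum I | P i] by rewrite mem_filter Pj mem_index_enum.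
elim: [seq i <- index_enum I | P i] => //= a s IH.
rewrite inE big_cons => /orP [/eqP <- | /IH h]; first exact: geq_minl.
exact: leq_trans (geq_minr _ _) h.
Qed.

Lemma ord_other n (x : 'I_n) : 1 < n -> exists x' : 'I_n, x' != x.
Proof.
rewrite -[n in 1 < n]card_ord => /card_gt1P [u [v [_ _ uv]]].
by case: (eqVneq u x) => [ux|]; [exists v; rewrite -ux eq_sym | exists u].
Qed.

(* Lets [/=] compute the coordinates of explicit triples. *)
#[local] Arguments coord1 {n1 n2 n3} A /.
#[local] Arguments coord2 {n1 n2 n3} A /.
#[local] Arguments coord3 {n1 n2 n3} A /.

Section Tripartite.
Variables n1 n2 n3 : nat.
Local Notation edge := (edge3 n1 n2 n3).
Local Notation vertex := (vert3 n1 n2 n3).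
Implicit Types (F : {set edge}) (A B E : edge) (v : vertex).

Definition intersecting F := {in F &, forall A B, ~~ edisjoint A B}.

Definition no_transversal_vertex F := forall v, exists2 B, B \in F & ~~ contains B v.

Lemma card_vert3 : #|[set: vertex]| = n1 + n2 + n3.
Proof. by rewrite cardsT /vert3 !card_sum !card_ord. Qed.

Lemma edisjointC A B : edisjoint A B = edisjoint B A.
Proof.
by rewrite /edisjoint ![coord1 A == _]eq_sym ![coord2 A == _]eq_sym ![coord3 A == _]eq_sym.
Qed.

Lemma meetP A B : ~~ edisjoint A B ->
  [\/ coord1 A = coord1 B, coord2 A = coord2 B | coord3 A = coord3 B].
Proof.
rewrite /edisjoint !negb_and !negbK.
by case/or3P => /eqP; [apply: Or31 | apply: Or32 | apply: Or33].
Qed.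

Lemma meet_off1 A B : ~~ edisjoint A B -> coord1 A != coord1 B ->
  coord2 A = coord2 B \/ coord3 A = coord3 B.
Proof. by case/meetP => [e | e | e]; [rewrite e eqxx | left | right]. Qed.

Lemma meet_skew A B : ~~ edisjoint A B ->
  coord2 A != coord2 B -> coord3 A != coord3 B -> coord1 A = coord1 B.
Proof. by case/meetP => // e; rewrite e eqxx. Qed.

Lemma intersecting_nu_le1 F : intersecting F -> nu F <= 1.
Proof.
move=> F_int; apply/bigmax_leqP => M /andP [/subsetP MF /forall_inP M_disj].
apply/card_le1_eqP => A B AM BM; apply/eqP.
apply: contraTT (F_int _ _ (MF _ AM) (MF _ BM)); rewrite negbK eq_sym => AB.
by move: (M_disj _ AM) => /forall_inP /(_ _ BM) /implyP; apply.
Qed.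

Lemma nu_le1_intersecting F : nu F <= 1 -> intersecting F.
Proof.
move=> nuF A B AF BF; apply/negP => dAB.
have AB : A != B by apply: contraTneq dAB => ->; rewrite /edisjoint eqxx.
have M_match : is_matching F [set A; B].
  apply/andP; split; first by apply/subsetP => C; rewrite !inE => /orP [] /eqP ->.
  apply/forall_inP => C; rewrite !inE => /orP [] /eqP ->;
  apply/forall_inP => D; rewrite !inE => /orP [] /eqP -> ; rewrite ?eqxx //=;
  by apply/implyP => _; rewrite // edisjointC.
by move: (leq_trans (leq_bigmax_cond _ M_match) nuF); rewrite cards2 AB.
Qed.

Lemma tau_gt1_no_transversal_vertex F : 1 < tau F -> no_transversal_vertex F.
Proof.
move=> tauF v; case: (boolP [exists B in F, ~~ contains B v]) => [/exists_inP //|].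
rewrite negb_exists_in => /forall_inP Fv.
have v_tr : Defs.is_transversal F [set v].
  apply/forall_inP => A AF; apply/exists_inP.
  by exists v; rewrite ?inE // -[contains _ _]negbK Fv.
have := bigmin_leq (fun S : {set vertex} => #|S|) #|[set: vertex]| v_tr.
by rewrite cards1 => tau_le1; move: (leq_trans tauF tau_le1).
Qed.

Lemma no_transversal_vertex_tau_gt1 F A :
  A \in F -> no_transversal_vertex F -> 1 < tau F.
Proof.
move=> AF F_nt; apply: (big_ind (fun m => 1 < m)).
- by rewrite card_vert3; case: A AF => [[[a1 ?] [a2 ?]] [a3 ?]] _; lia.
- by move=> a b ha hb; rewrite leq_min ha hb.
move=> S /forall_inP S_tr; case/exists_inP: (S_tr _ AF) => v vS _.
have [B BF Bv] := F_nt v; case/exists_inP: (S_tr _ BF) => w wS Bw.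
by apply/card_gt1P; exists v, w; split=> //; apply: contraNneq Bv => ->.
Qed.

Definition set_coord (p : edge) (v : vertex) : edge :=
  match v with
  | inl (inl x) => (x, coord2 p, coord3 p)
  | inl (inr y) => (coord1 p, y, coord3 p)
  | inr z => (coord1 p, coord2 p, z)
  end.

Definition lines_through (p : edge) : {set edge} := set_coord p @: [set: vertex].

Lemma card_lines_through p : #|lines_through p| = n1 + n2 + n3 - 2.
Proof.
set D := ~: [set inl (inr (coord2 p)); inr (coord3 p) : vertex].
have -> : lines_through p = set_coord p @: D.
  apply/eqP; rewrite eqEsubset (imsetS _ (subsetT D)) andbT.
  apply/subsetP => _ /imsetP [v _ ->].
  have [vD | vnD] := boolP (v \in D); first exact: imset_f.
  suff -> : set_coord p v = set_coord p (inl (inl (coord1 p))) by rewrite imset_f // !inE.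
  move: v vnD => [[x|y]|z]; rewrite !inE negbK // => /orP [] /eqP // [->];
  by case: p {D} => [[]].
rewrite /D card_in_imset.
  have := cardsC [set inl (inr (coord2 p)); inr (coord3 p) : vertex].
  by rewrite -cardsT card_vert3 cards2 /=; lia.
move=> [[x|y]|z] [[x'|y']|z']; rewrite !inE /= => hu hv; case => //.
all: try (by move=> ->).
all: by move=> e1 e2; move: hu hv; rewrite -?e1 -?e2 ?eqxx ?orbT.
Qed.

Lemma mem_lines_through p : p \in lines_through p.
Proof. by apply/imsetP; exists (inl (inl (coord1 p))); case: p => [[]]. Qed.

Lemma lines_through_intersecting p : intersecting (lines_through p).
Proof.
move=> _ _ /imsetP [[[x|y]|z] _ ->] /imsetP [[[x'|y']|z'] _ ->];
by rewrite /edisjoint /= eqxx ?andbF.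
Qed.

Lemma lines_through_no_transversal_vertex p :
  1 < n1 -> 1 < n2 -> 1 < n3 -> no_transversal_vertex (lines_through p).
Proof.
have pL := mem_lines_through p.
move=> n1_gt1 n2_gt1 n3_gt1 [[x|y]|z].
- case: (eqVneq x (coord1 p)) => [-> | x_p]; last by exists p; rewrite //= eq_sym.
  have [x' x'_p] := ord_other (coord1 p) n1_gt1.
  by exists (set_coord p (inl (inl x'))); rewrite ?imset_f ?inE.
- case: (eqVneq y (coord2 p)) => [-> | y_p]; last by exists p; rewrite //= eq_sym.
  have [y' y'_p] := ord_other (coord2 p) n2_gt1.
  by exists (set_coord p (inl (inr y'))); rewrite ?imset_f ?inE.
- case: (eqVneq z (coord3 p)) => [-> | z_p]; last by exists p; rewrite //= eq_sym.
  have [z' z'_p] := ord_other (coord3 p) n3_gt1.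
  by exists (set_coord p (inr z')); rewrite ?imset_f ?inE.
Qed.

Lemma skew_pair F A : A \in F -> no_transversal_vertex F ->
  exists E E', [/\ E \in F, E' \in F, coord2 E != coord2 E' & coord3 E != coord3 E'].
Proof.
move=> AF F_nt.
have [B BF /= BA] := F_nt (inl (inr (coord2 A))).
have [C CF /= CA] := F_nt (inr (coord3 A)).
case: (eqVneq B.1.2 C.1.2) => [BC | BC].
  by exists A, C; split; rewrite //= eq_sym -?BC.
case: (eqVneq B.2 C.2) => [BC' | BC']; last by exists B, C.
by exists A, B; split; rewrite //= eq_sym ?BC'.
Qed.

Section Configuration.
Variables (F : {set edge}) (x0 : 'I_n1) (b b' : 'I_n2) (c c' : 'I_n3).
Hypotheses (F_int : intersecting F) (EF : (x0, b, c) \in F) (E'F : (x0, b', c') \in F).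
Hypotheses (bb' : b != b') (cc' : c != c').

Lemma off_apex h1 h2 h3 : (h1, h2, h3) \in F -> h1 != x0 ->
  (h2 = b /\ h3 = c') \/ (h2 = b' /\ h3 = c).
Proof.
move=> HF hx.
have [/= h1x | /= h2b | /= h3c] := meetP (F_int HF EF); first by rewrite h1x eqxx in hx.
- have [/= h1x | /= h2b' | /= h3c'] := meetP (F_int HF E'F); first by rewrite h1x eqxx in hx.
    by move: bb'; rewrite -h2b h2b' eqxx.
  by left.
- have [/= h1x | /= h2b' | /= h3c'] := meetP (F_int HF E'F); first by rewrite h1x eqxx in hx.
    by right.
  by move: cc'; rewrite -h3c h3c' eqxx.
Qed.

Variables (y : 'I_n1) (GF : (y, b, c') \in F) (yx0 : y != x0).

Lemma apex_pair_sub_four : (y, b', c) \in F ->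
  F \subset [:: (x0, b, c); (x0, b', c'); (y, b, c'); (y, b', c)].
Proof.
move=> G'F; apply/subsetP => -[[h1 h2] h3] HF; rewrite !inE.
case: (eqVneq h1 x0) => [hx0 | hx].
  have h1y : h1 != y by rewrite hx0 eq_sym.
  have [/= e2 | /= e3] := meet_off1 (F_int HF GF) h1y;
  have [/= e2' | /= e3'] := meet_off1 (F_int HF G'F) h1y.
  - by move: bb'; rewrite -e2 e2' eqxx.
  - by rewrite hx0 e2 e3' eqxx.
  - by rewrite hx0 e2' e3 eqxx !orbT.
  - by move: cc'; rewrite -e3' e3 eqxx.
have [[e2 e3] | [e2 e3]] := off_apex HF hx; rewrite e2 e3 in HF *.
  have c'c : c' != c by rewrite eq_sym.
  by have /= -> := meet_skew (F_int HF G'F) bb' c'c; rewrite eqxx !orbT.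
have b'b : b' != b by rewrite eq_sym.
by have /= -> := meet_skew (F_int HF GF) b'b cc'; rewrite eqxx !orbT.
Qed.

Lemma apex_pair_sub_lines : (y, b', c) \notin F -> F \subset lines_through (x0, b, c').
Proof.
move=> G'F; apply/subsetP => -[[h1 h2] h3] HF; apply/imsetP.
case: (eqVneq h1 x0) => [hx0 | hx].
  have h1y : h1 != y by rewrite hx0 eq_sym.
  have [/= e2 | /= e3] := meet_off1 (F_int HF GF) h1y.
    by exists (inr h3); rewrite ?inE // hx0 e2.
  by exists (inl (inr h2)); rewrite ?inE // hx0 e3.
have [[e2 e3] | [e2 e3]] := off_apex HF hx.
  by exists (inl (inl h1)); rewrite ?inE // e2 e3.
rewrite e2 e3 in HF; have b'b : b' != b by rewrite eq_sym.
have /= h1y := meet_skew (F_int HF GF) b'b cc'.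
by move: G'F; rewrite -h1y HF.
Qed.

Lemma apex_pair_card_le : 6 <= n1 + n2 + n3 -> #|F| <= n1 + n2 + n3 - 2.
Proof.
move=> n_ge6; have [G'F | G'F] := boolP ((y, b', c) \in F).
  apply: leq_trans (subset_leq_card (apex_pair_sub_four G'F)) _.
  by apply: leq_trans (card_size _) _ => /=; lia.
by rewrite -(card_lines_through (x0, b, c')) subset_leq_card // apex_pair_sub_lines.
Qed.
End Configuration.

Lemma card_intersecting_le F : intersecting F -> no_transversal_vertex F ->
  6 <= n1 + n2 + n3 -> #|F| <= n1 + n2 + n3 - 2.
Proof.
move=> F_int F_nt n_ge6; have [-> | [A AF]] := set_0Vmem F; first by rewrite cards0.
have [[[x0 b] c] [[[x0' b'] c'] [EF E'F /= bb' cc']]] := skew_pair AF F_nt.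
have /= x0x0' := meet_skew (F_int _ _ EF E'F) bb' cc'; rewrite -x0x0' in E'F.
have [[[y h2] h3] GF /= yx0] := F_nt (inl (inl x0)).
have [[e2 e3] | [e2 e3]] := off_apex F_int EF E'F bb' cc' GF yx0; rewrite {}e2 {}e3 in GF.
  exact: (apex_pair_card_le F_int EF E'F bb' cc' GF yx0 n_ge6).
have b'b : b' != b by rewrite eq_sym.
have c'c : c' != c by rewrite eq_sym.
exact: (apex_pair_card_le F_int E'F EF b'b c'c GF yx0 n_ge6).
Qed.
End Tripartite.

Theorem theorem1p3 (n1 n2 n3 : nat) :
  n1 >= n2 -> n2 >= n3 -> n3 >= 2 ->
  m0 n1 n2 n3 1 = n1 + n2 + n3 - 2.
Proof.
move=> n12 n23 n3_ge2.
have n2_ge2 : 1 < n2 by lia.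
have n1_ge2 : 1 < n1 by lia.
apply/eqP; rewrite eqn_leq; apply/andP; split.
  apply/bigmax_leqP => F /andP [/nu_le1_intersecting F_int tauF].
  by apply: card_intersecting_le F_int (tau_gt1_no_transversal_vertex tauF) _; lia.
pose p : edge3 n1 n2 n3 :=
  (Ordinal (ltnW n1_ge2), Ordinal (ltnW n2_ge2), Ordinal (ltnW n3_ge2)).
rewrite -(card_lines_through p); apply: leq_bigmax_cond; apply/andP; split.
  exact/intersecting_nu_le1/lines_through_intersecting.
apply: no_transversal_vertex_tau_gt1 (mem_lines_through p) _.
exact: lines_through_no_transversal_vertex.
Qed.
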